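(* Let $\mathbb{M}=(M_p)_{p\in\mathbb{N}_0}$ be a sequence of positive real numbers with $M_0=1$ such that $\widehat{\mathbb{M}}=(p!M_p)_{p\in\mathbb{N}_0}$ is a weight sequence and $\lim_{p\to\infty}M_p^{1/p}=\infty$. Assume that $\gamma(\omega_{\widehat{\mathbb{M}}})>1$. Then $\gamma(\omega_{\widehat{\mathbb{M}}})=\gamma(\omega_{\mathbb{M}})+1$.
   Context: A weight sequence is a sequence $\mathbb{L}=(L_p)_{p\in\mathbb{N}_0}$ of positive reals with $L_0=1$, $L_p^2\le L_{p-1}L_{p+1}$ for $p\ge1$, and $\lim_{p\to\infty}L_p^{1/p}=\infty$. For a positive sequence $\mathbb{L}$ with $L_0=1$, its associated function is $\omega_{\mathbb{L}}(t):=\sup_{p\in\mathbb{N}_0}\log(t^p/L_p)$ for $t>0$ and $\omega_{\mathbb{L}}(0)=0$. For a nondecreasing $\sigma:[0,\infty)\to[0,\infty)$ with $\sigma(t)\to\infty$ and $\gamma>0$, say $(P_{\sigma,\gamma})$ holds if there is $K>1$ with $\limsup_{t\to\infty}\sigma(K^{\gamma}t)/\sigma(t)<K$; $\gamma(\sigma):=\sup\{\gamma>0:(P_{\sigma,\gamma})\text{ holds}\}$, and $\gamma(\sigma):=0$ if none holds. *)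

From HB Require Import structures.
From mathcomp Require Import all_boot all_order all_algebra.
From mathcomp Require Import all_classical all_reals all_analysis.
Set Implicit Arguments. Unset Strict Implicit. Unset Printing Implicit Defensive.
Import Order.TTheory GRing.Theory Num.Theory.
Import numFieldNormedType.Exports.
Local Open Scope classical_set_scope.
Local Open Scope ring_scope.

Definition root_unbounded (R : realType) (L : nat -> R) : Prop :=
  (fun p : nat => L p `^ (p%:R)^-1) @ \oo --> +oo.

Definition weight_seq (R : realType) (L : nat -> R) : Prop :=
  [/\ forall p, 0 < L p,
      L 0%N = 1,
      forall p : nat, L p.+1 ^+ 2 <= L p * L p.+2
    & root_unbounded L].

Definition assoc_fun (R : realType) (L : nat -> R) (t : R) : R :=
  if t == 0 then 0 else sup (range (fun p : nat => ln (t ^+ p / L p))).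

Definition P_prop (R : realType) (sigma : R -> R) (g : R) : Prop :=
  exists K : R, 1 < K /\
    (limf_esup (fun t : R => (sigma (K `^ g * t) / sigma t)%:E) (pinfty_nbhs R)
      < K%:E)%E.

(* gamma(sigma) = sup {gamma > 0 : (P_{sigma,gamma})}, and 0 if no such gamma.
   Taking the sup of {0} together with these (positive) gammas gives exactly
   this (value in the extended reals, possibly +oo). *)
Definition gamma_index (R : realType) (sigma : R -> R) : \bar R :=
  ereal_sup ([set 0%E] `|` [set g%:E | g in [set g : R | 0 < g /\ P_prop sigma g]]).

(* Write om = assoc_fun M and omh = assoc_fun Mh, where Mh p = p! M p.  Splitting
   t^p / (p! M_p) = ((t/u)^p / M_p) (u^p / p!) and using u^p / p! <= e^u gives
   omh t <= om (t/u) + u.  Conversely, if omh grows at most linearly under dilations,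
   omh (lam t) <= mu lam (omh t), then p! <= p^p gives om (t / (e mu (omh t))) <= omh t
   for large t.
   Property (P_{s,g}) amounts to an eventual bound s (mu t) <= ka (s t) with
   g ln ka < ln mu.  The two comparisons turn a bound (mu, ka) for om into
   (ka mu, (1 + e mu0) ka) for omh, and a bound (mu, ka) for omh with ka < mu into
   (c (mu/ka)^m, 2 ka^m) for om.  Applied to iterated bounds the constant factors
   become negligible, so (P_{om,g}) gives (P_{omh,g+1}) and, for g > 1, (P_{omh,g})
   gives (P_{om,g-1}); the hypothesis gamma(omh) > 1 provides the bound (mu0, ka0)
   for omh with ka0 < mu0 that the first transfer needs. *)

From mathcomp Require Import all_boot all_order all_algebra.
From mathcomp Require Import all_classical all_reals all_analysis.
From mathcomp Require Import ring lra.
Import Order.TTheory GRing.Theory Num.Theory.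
Local Open Scope classical_set_scope.
Local Open Scope ring_scope.
Set Implicit Arguments. Unset Strict Implicit.

Lemma exists_expr_gt (R : realType) (rho y : R) : 1 < rho -> exists k : nat, y < rho ^+ k.
Proof.
move=> rho1; have rho0 : 0 < rho by apply: lt_trans rho1.
have [y0|y0] := lerP y 0; first by exists 0%N; rewrite expr0 (le_lt_trans y0).
exists (Num.truncn (ln y / ln rho)).+1.
rewrite -ltr_ln ?posrE ?exprn_gt0 // lnXn // -mulr_natl -ltr_pdivrMr ?ln_gt0 //.
exact: truncnS_gt.
Qed.

Lemma exists_nat_affine_lt (R : realType) (g a b lm lk : R) : 0 < lm -> g * lk < lm ->
  exists n : nat, 0 < a + n%:R * lm /\ g * (b + n%:R * lk) < a + n%:R * lm.
Proof.
move=> lm0 glk; have d0 : 0 < lm - g * lk by rewrite subr_gt0.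
set x := Num.max (`|g * b - a| / (lm - g * lk)) (`|a| / lm).
exists (Num.truncn x).+1; have := truncnS_gt x; rewrite gt_max => /andP[].
rewrite !ltr_pdivrMr // => h1 h2.
have n1 := ler_norm (g * b - a); have n2 := ler_norm (- a); rewrite normrN in n2.
split; lra.
Qed.

Lemma ltr_of_scaled_ln_lt (R : realType) (g ka mu : R) : 1 <= g -> 1 < ka -> 0 < mu ->
  g * ln ka < ln mu -> ka < mu.
Proof.
move=> g1 ka1 mu0 kamu; have ka0 := lt_trans ltr01 ka1.
rewrite -ltr_ln ?posrE //; apply: le_lt_trans kamu.
by apply: ler_peMl g1; rewrite ln_ge0 // ltW.
Qed.

Lemma fact_leq_expn q : (q`! <= q ^ q)%N.
Proof.
elim: q => // q IHq; rewrite factS expnS leq_mul2l; apply/orP; right.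
by apply: leq_trans IHq _; case: q => // q; rewrite leq_exp2r.
Qed.

Lemma expr_div_fact_le_expR (R : realType) (u : R) p : 0 <= u -> u ^+ p / p`!%:R <= expR u.
Proof.
move=> u0; case: p => [|p]; last by apply: le_trans (expR_ge1Dxn p u0); rewrite lerDr.
by rewrite expr0 fact0 divr1; apply: le_trans (expR_ge1Dx u); rewrite lerDl.
Qed.

Section AssocFun.
Variables (R : realType) (L : nat -> R).
Hypotheses (L_gt0 : forall p, 0 < L p) (L_root : root_unbounded L).

Lemma assoc_fun_le t B : 0 < t -> (forall p, ln (t ^+ p / L p) <= B) -> assoc_fun L t <= B.
Proof.
move=> t0 terms_le; rewrite /assoc_fun gt_eqF //.
by apply: ge_sup => [|_ [q _ <-]]; [exists (ln (t ^+ 0 / L 0)), 0%N|exact: terms_le].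
Qed.

Lemma assoc_fun_terms_bounded t : 0 < t -> exists B, forall p, ln (t ^+ p / L p) <= B.
Proof.
move=> t0; have [N _ LN] := (cvgryPge _).1 L_root t.
exists (\big[Num.max/0]_(q <- iota 0 N.+1) ln (t ^+ q / L q)) => p.
have [pN|Np] := ltnP p N.+1.
  apply: (le_bigmax_seq _ p xpredT (fun q => ln (t ^+ q / L q))) => //.
  by rewrite mem_iota.
have tL : t ^+ p <= L p.
  have p0 : p != 0%N by case: p Np.
  have -> : L p = (L p `^ (p%:R)^-1) ^+ p.
    by rewrite -powR_mulrn ?powR_ge0 // -powRrM mulVf ?powRr1 ?pnatr_eq0 ?ltW.
  by apply: lerXn2r; rewrite ?nnegrE ?powR_ge0 ?(ltW t0) //; exact: LN (ltnW Np).
apply: (le_trans (ln_le0 _)); last exact: bigmax_ge_id.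
by rewrite ler_pdivrMr // mul1r.
Qed.

Lemma assoc_fun_ge t p : 0 < t -> ln (t ^+ p / L p) <= assoc_fun L t.
Proof.
move=> t0; rewrite /assoc_fun gt_eqF //.
have [B terms_le] := assoc_fun_terms_bounded t0.
by apply: ub_le_sup; [exists B => _ [q _ <-]; exact: terms_le|exists p].
Qed.

Lemma assoc_fun_nondecreasing s t : 0 < s -> s <= t -> assoc_fun L s <= assoc_fun L t.
Proof.
move=> s0 st; have t0 := lt_le_trans s0 st.
apply: assoc_fun_le => // p; apply: le_trans (assoc_fun_ge p t0).
rewrite ler_ln ?posrE ?divr_gt0 ?exprn_gt0 //.
by rewrite ler_pM2r ?invr_gt0 // lerXn2r // nnegrE ltW.
Qed.

Lemma assoc_fun_gt0 t : L 1%N < t -> 0 < assoc_fun L t.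
Proof.
move=> Lt; have t0 := lt_trans (L_gt0 1) Lt.
by apply: lt_le_trans (assoc_fun_ge 1 t0); rewrite expr1 ln_gt0 // ltr_pdivlMr // mul1r.
Qed.

Lemma assoc_fun_eventually_gt0 : exists T, forall t, T <= t -> 0 < assoc_fun L t.
Proof.
by exists (L 1%N + 1) => t Tt; apply/assoc_fun_gt0/(lt_le_trans _ Tt); rewrite ltrDl.
Qed.

Hypothesis L0 : L 0%N = 1.

Lemma assoc_fun_ge0 t : 0 < t -> 0 <= assoc_fun L t.
Proof. by move=> t0; apply: le_trans (assoc_fun_ge 0 t0); rewrite expr0 L0 divr1 ln1. Qed.

End AssocFun.

Section Dilation.
Variables (R : realType) (s : R -> R).

Definition dilation_bounded (mu ka : R) :=
  exists t0, 0 < t0 /\ forall t, t0 <= t -> s (mu * t) <= ka * s t.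

Lemma dilation_bounded_iter mu ka : dilation_bounded mu ka -> 1 <= mu -> 0 <= ka ->
  exists t0, 0 < t0 /\ forall n t, t0 <= t -> s (mu ^+ n * t) <= ka ^+ n * s t.
Proof.
move=> [t0 [t00 s_dil]] mu1 ka0; exists t0; split => // n t tt0.
have t_gt0 := lt_le_trans t00 tt0.
elim: n => [|n IHn]; first by rewrite !mul1r.
rewrite exprS -mulrA; apply: le_trans (s_dil _ _) _.
  by apply: le_trans tt0 _; rewrite ler_pMl // exprn_ege1.
by rewrite exprS -mulrA ler_wpM2l.
Qed.

Lemma dilation_boundedX mu ka n : dilation_bounded mu ka -> 1 <= mu -> 0 <= ka ->
  dilation_bounded (mu ^+ n) (ka ^+ n).
Proof.
move=> s_dil mu1 ka0; have [t0 [t00 s_iter]] := dilation_bounded_iter s_dil mu1 ka0.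
by exists t0; split => // t; apply: s_iter.
Qed.

Lemma P_prop_of_dilation g mu ka : 0 < g -> 1 < mu -> 0 < ka -> g * ln ka < ln mu ->
  (exists T, forall t, T <= t -> 0 < s t) -> dilation_bounded mu ka -> P_prop s g.
Proof.
move=> g0 mu1 ka0 kamu [T sT] [t0 [t00 s_dil]].
have mu0 := lt_trans ltr01 mu1.
exists (mu `^ g^-1); split.
  by rewrite -ltr_ln ?posrE ?powR_gt0 // ln1 ln_powR mulr_gt0 ?invr_gt0 ?ln_gt0.
rewrite -powRrM mulVf ?gt_eqF // powRr1 ?ltW //.
apply: (@le_lt_trans _ _ ka%:E); last first.
  by rewrite lte_fin -ltr_ln ?posrE ?powR_gt0 // ln_powR mulrC ltr_pdivlMr // mulrC.
set T1 := Num.max t0 T.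
apply: (@le_trans _ _ (ereal_sup ((fun t => (s (mu * t) / s t)%:E) @` [set t | T1 < t]))).
  apply: ereal_inf_lbound; exists [set t | T1 < t] => //.
  by exists T1; split; [exact: num_real | move=> x].
apply: ge_ereal_sup => _ [t /= T1t <-]; rewrite lee_fin.
move: T1t; rewrite gt_max => /andP[/ltW t0t /ltW Tt].
by rewrite ler_pdivrMr ?sT // s_dil.
Qed.

Lemma dilation_of_P_prop g : 0 < g -> P_prop s g ->
  (exists T, forall t, T <= t -> 0 < s t) ->
  exists mu ka, [/\ 1 < mu, 1 < ka, g * ln ka < ln mu & dilation_bounded mu ka].
Proof.
move=> g0 [K [K1 limsup_lt]] [T sT].
have K0 : 0 < K by apply: lt_trans K1.
have [_ [V [c [_ Vc]] <-] yK] := ereal_inf_lt limsup_lt.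
set y := ereal_sup _ in yK.
have fyK : fine y < K by move: yK; case: (y) => [r||] //=; rewrite ?lte_fin.
set ka := Num.max ((1 + K) / 2) ((fine y + K) / 2).
have kaK : ka < K by rewrite gt_max; apply/andP; split; lra.
have ka1 : 1 < ka by rewrite lt_max; apply/orP; left; lra.
have yka : (y < ka%:E)%E.
  move: yK fyK; rewrite /ka; case: (y) => [r||] //= _ h; last by rewrite ltNyr.
  by rewrite lte_fin lt_max; apply/orP; right; lra.
exists (K `^ g), ka; split => //.
- by rewrite -ltr_ln ?posrE ?powR_gt0 // ln1 ln_powR mulr_gt0 ?ln_gt0.
- by rewrite ln_powR ltr_pM2l // ltr_ln ?posrE // (lt_trans ltr01).
exists (Num.max (Num.max (c + 1) T) 1); split; first by rewrite lt_max ltr01 orbT.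
move=> t; rewrite !ge_max => /andP[/andP[ct Tt] _].
have Vt : V t by apply: Vc; apply: lt_le_trans ct; rewrite ltrDl.
have : ((s (K `^ g * t) / s t)%:E <= y)%E by apply: ereal_sup_ubound; exists t.
by move=> /le_lt_trans /(_ yka); rewrite lte_fin ltr_pdivrMr ?sT // => /ltW.
Qed.

Lemma dilation_bounded_ratio_unbounded c mu ka : (forall t, 0 < t -> s t <= c + t) ->
  dilation_bounded mu ka -> 1 < mu -> 0 < ka -> ka < mu ->
  forall B, 0 <= B -> exists T, 0 < T /\ forall t, T <= t -> B * s t <= t.
Proof.
move=> s_lin s_dil mu1 ka0 kamu B B0.
have [t0 [t00 s_iter]] := dilation_bounded_iter s_dil (ltW mu1) (ltW ka0).
have mu0 := lt_trans ltr01 mu1.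
have [k Bk] : exists k, 2 * B < (mu / ka) ^+ k.
  by apply: exists_expr_gt; rewrite ltr_pdivlMr // mul1r.
exists (mu ^+ k * Num.max t0 c); split; first by rewrite mulr_gt0 ?exprn_gt0 // lt_max t00.
move=> t Tt; set u := t / mu ^+ k.
have t_eq : t = mu ^+ k * u by rewrite /u mulrC divfK // gt_eqF ?exprn_gt0.
have : Num.max t0 c <= u by rewrite /u ler_pdivlMr ?exprn_gt0 // mulrC.
rewrite ge_max => /andP[t0u cu].
have u0 := lt_le_trans t00 t0u.
have su : s t <= ka ^+ k * (2 * u).
  rewrite t_eq; apply: le_trans (s_iter k u t0u) _; apply: ler_wpM2l; first exact/exprn_ge0/ltW.
  by have := s_lin u u0; lra.
apply: le_trans (_ : B * (ka ^+ k * (2 * u)) <= _); first exact: (ler_wpM2l B0 su).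
have -> : B * (ka ^+ k * (2 * u)) = ka ^+ k * (2 * B * u) by ring.
have -> : t = ka ^+ k * ((mu / ka) ^+ k * u).
  by rewrite t_eq mulrA -exprMn [ka * _]mulrC divfK // lt0r_neq0.
by rewrite ler_pM2l ?exprn_gt0 // ler_pM2r // ltW.
Qed.

Hypotheses (s_ge0 : forall t, 0 < t -> 0 <= s t)
  (s_nondecreasing : forall x y, 0 < x -> x <= y -> s x <= s y).

Lemma dilation_bounded_linear mu ka : dilation_bounded mu ka -> 1 < mu -> 0 <= ka -> ka <= mu ->
  exists t0, 0 < t0 /\ forall t lam, t0 <= t -> 1 <= lam -> s (lam * t) <= mu * lam * s t.
Proof.
move=> s_dil mu1 ka0 kamu.
have [t0 [t00 s_iter]] := dilation_bounded_iter s_dil (ltW mu1) ka0.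
exists t0; split => // t lam tt0 lam1.
have t_gt0 := lt_le_trans t00 tt0.
have [N lamN N_min] := ex_minnP (exists_expr_gt lam mu1).
case: N lamN N_min => [|k] lamN N_min; first by move: (le_lt_trans lam1 lamN); rewrite ltxx.
have mu_k : mu ^+ k <= lam by rewrite leNgt; apply/negP => /N_min; rewrite ltnn.
have lam_t : lam * t <= mu ^+ k.+1 * t by rewrite ler_pM2r // ltW.
apply: le_trans (s_nondecreasing (mulr_gt0 (lt_le_trans ltr01 lam1) t_gt0) lam_t) _.
apply: le_trans (s_iter _ _ tt0) _; apply: ler_wpM2r; first exact: s_ge0.
apply: le_trans (_ : mu ^+ k.+1 <= _); first by apply: lerXn2r; rewrite ?nnegrE ?(le_trans ka0).
by rewrite exprS ler_wpM2l // (le_trans ler01 (ltW mu1)).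
Qed.

Lemma exists_ratio_bracket T0 mu r : 0 < T0 -> (forall t, T0 <= t -> 0 < s t) ->
  (forall B, 0 <= B -> exists T, 0 < T /\ forall t, T <= t -> B * s t <= t) ->
  1 < mu -> T0 / s T0 <= r ->
  exists t, [/\ T0 <= t, t / s t <= r & r < mu * (t / s t)].
Proof.
move=> T00 s_gt0 s_ratio mu1 r_ge.
have mu0 := lt_trans ltr01 mu1.
have r0 : 0 < r := lt_le_trans (divr_gt0 T00 (s_gt0 _ (lexx _))) r_ge.
pose t_ k := mu ^+ k * T0.
have T0t k : T0 <= t_ k by rewrite ler_pMl // exprn_ege1 // ltW.
have [T [_ sT]] := s_ratio (2 * r) (mulr_ge0 (ler0n _ 2) (ltW r0)).
have [k0 Tk0] := exists_expr_gt (T / T0) mu1.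
have ex_k : exists k, r < t_ k / s (t_ k).
  exists k0; have stk := s_gt0 _ (T0t k0).
  rewrite ltr_pdivrMr // in Tk0; have := sT (t_ k0) (ltW Tk0).
  by have := mulr_gt0 r0 stk; rewrite ltr_pdivlMr //; lra.
have [N rN N_min] := ex_minnP ex_k.
case: N rN N_min => [|k] rN N_min.
  by move: rN; rewrite /t_ expr0 mul1r ltNge r_ge.
exists (t_ k); split => //; first by rewrite leNgt; apply/negP => /N_min; rewrite ltnn.
apply: lt_le_trans rN _; have -> : t_ k.+1 = mu * t_ k by rewrite /t_ exprS mulrA.
have t_pos := lt_le_trans T00 (T0t k).
have t_mu : t_ k <= mu * t_ k by rewrite ler_pMl // ltW.
rewrite -mulrA ler_pM2l // ler_pM2l // lef_pV2 ?posrE ?s_gt0 ?(le_trans (T0t k)) //.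
exact: s_nondecreasing.
Qed.

End Dilation.

Section GammaIndex.
Variables (R : realType) (s : R -> R).
Local Open Scope ereal_scope.

Lemma gamma_index_ge0 : 0 <= gamma_index s.
Proof. by apply: ereal_sup_ubound; left. Qed.

Lemma le_gamma_index g : (0 < g)%R -> P_prop s g -> g%:E <= gamma_index s.
Proof. by move=> g0 Pg; apply: ereal_sup_ubound; right; exists g. Qed.

Lemma gamma_index_le x : 0 <= x -> (forall g, (0 < g)%R -> P_prop s g -> g%:E <= x) ->
  gamma_index s <= x.
Proof. by move=> x0 Px; apply: ge_ereal_sup => _ [->|[g [g0 Pg] <-]]; last exact: Px. Qed.

Lemma lt_gamma_index x : (0 <= x)%R -> x%:E < gamma_index s -> exists g, (x < g)%R /\ P_prop s g.
Proof.
move=> x0 /ereal_sup_gt[_ [->|[g [_ Pg] <-]]]; last by rewrite lte_fin; exists g.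
by rewrite lte_fin ltNge x0.
Qed.

End GammaIndex.




Section FactorialWeight.
Variables (R : realType) (M : nat -> R).
Hypotheses (M_gt0 : forall p, 0 < M p) (M0 : M 0%N = 1) (M_root : root_unbounded M).

Local Notation Mh := (fun p : nat => (p`!%:R * M p)%R).
Local Notation om := (assoc_fun M).
Local Notation omh := (assoc_fun Mh).

Hypothesis Mh_root : root_unbounded Mh.

Lemma fact_weight_gt0 p : 0 < p`!%:R * M p.
Proof. by rewrite mulr_gt0 // ltr0n fact_gt0. Qed.

Lemma fact_weight0 : 0`!%:R * M 0%N = 1.
Proof. by rewrite fact0 mul1r M0. Qed.

Let omh_ge0 t : 0 < t -> 0 <= omh t := assoc_fun_ge0 fact_weight_gt0 Mh_root fact_weight0 (t:=t).
Let omh_nondecreasing x y : 0 < x -> x <= y -> omh x <= omh y :=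
  assoc_fun_nondecreasing fact_weight_gt0 Mh_root (s:=x) (t:=y).
Let om_nondecreasing x y : 0 < x -> x <= y -> om x <= om y :=
  assoc_fun_nondecreasing M_gt0 M_root (s:=x) (t:=y).

Lemma assoc_fun_fact_le s u : 0 < s -> 0 < u -> omh s <= om (s / u) + u.
Proof.
move=> s0 u0; apply: assoc_fun_le => // p.
have fact0 : 0 < p`!%:R :> R by rewrite ltr0n fact_gt0.
have -> : s ^+ p / (p`!%:R * M p) = ((s / u) ^+ p / M p) * (u ^+ p / p`!%:R).
  by rewrite expr_div_n; field; rewrite ?expf_neq0 ?lt0r_neq0.
rewrite lnM ?posrE ?divr_gt0 ?exprn_gt0 // ?divr_gt0 //; apply: lerD.
  exact: (assoc_fun_ge M_gt0 M_root p (divr_gt0 s0 u0)).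
by rewrite -[leRHS]expRK ler_ln ?posrE ?expR_gt0 ?divr_gt0 ?exprn_gt0 ?expr_div_fact_le_expR ?ltW.
Qed.

Lemma assoc_fun_rescaled_le_fact mu t0 : 0 < mu -> 0 < t0 ->
  (forall t lam, t0 <= t -> 1 <= lam -> omh (lam * t) <= mu * lam * omh t) ->
  forall t, t0 <= t -> 0 < omh t -> om (t / (expR 1 * mu * omh t)) <= omh t.
Proof.
move=> mu0 t00 omh_growth t tt0 g0; have t_gt0 := lt_le_trans t00 tt0.
set g := omh t in g0 *; set r := t / (expR 1 * mu * g).
have r0 : 0 < r by rewrite divr_gt0 // !mulr_gt0 ?expR_gt0.
apply: assoc_fun_le => // -[|q]; first by rewrite expr0 M0 divr1 ln1 ltW.
set n := q.+1; set x := expR 1 * n%:R * r.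
have x0 : 0 < x by rewrite /x (mulr_gt0 _ r0) // mulr_gt0 ?expR_gt0.
have omh_x : omh x <= g + n%:R.
  have [xt|tx] := lerP x t.
    by apply: le_trans (omh_nondecreasing x0 xt) _; rewrite lerDl.
  have := omh_growth t (x / t) tt0; rewrite divfK ?lt0r_neq0 // ler_pdivlMr // mul1r.
  have -> : mu * (x / t) * g = n%:R.
    by rewrite /x /r; field; rewrite ?lt0r_neq0 ?expR_gt0.
  by move=> /(_ (ltW tx)) /le_trans; apply; rewrite lerDr ltW.
have fact0 : 0 < n`!%:R :> R by rewrite ltr0n fact_gt0.
have term : ln (r ^+ n / M n) + n%:R <= ln (x ^+ n / (n`!%:R * M n)).
  have a0 : 0 < r ^+ n / M n by rewrite divr_gt0 ?exprn_gt0.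
  have b0 : 0 < n%:R ^+ n / n`!%:R :> R by rewrite divr_gt0 ?exprn_gt0.
  have -> : x ^+ n / (n`!%:R * M n) = r ^+ n / M n * expR n%:R * (n%:R ^+ n / n`!%:R).
    rewrite /x !exprMn -expRM_natl mulr1; field.
    by rewrite ?lt0r_neq0 ?expR_gt0.
  have ae0 : 0 < r ^+ n / M n * expR n%:R by rewrite mulr_gt0 ?expR_gt0.
  rewrite -[n%:R in leLHS]expRK -lnM ?posrE ?expR_gt0 // ler_ln ?posrE ?(mulr_gt0 ae0) //.
  by rewrite ler_pMr // ler_pdivlMr // mul1r -natrX ler_nat fact_leq_expn.
have /= := assoc_fun_ge fact_weight_gt0 Mh_root n x0; lra.
Qed.

Section FactorialDilation.
Variables mu0 ka0 : R.
Hypotheses (omh_dil : dilation_bounded omh mu0 ka0) (mu0_gt1 : 1 < mu0)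
  (ka0_gt0 : 0 < ka0) (ka0_lt_mu0 : ka0 < mu0).

Lemma assoc_fun_fact_ratio_unbounded B : 0 <= B ->
  exists T, 0 < T /\ forall t, T <= t -> B * omh t <= t.
Proof.
have omh_lin t : 0 < t -> omh t <= om 1 + t.
  by move=> t0; have := assoc_fun_fact_le t0 t0; rewrite divff ?lt0r_neq0.
move=> B0; exact: (dilation_bounded_ratio_unbounded omh_lin omh_dil mu0_gt1 ka0_gt0 ka0_lt_mu0 B0).
Qed.

Lemma assoc_fun_rescaled_le_fact_eventually : exists t1, 0 < t1 /\ forall t, t1 <= t ->
  0 < omh t /\ om (t / (expR 1 * mu0 * omh t)) <= omh t.
Proof.
have mu0_gt0 := lt_trans ltr01 mu0_gt1.
have [t0 [t00 growth]] :=
  dilation_bounded_linear omh_ge0 omh_nondecreasing omh_dil mu0_gt1 (ltW ka0_gt0) (ltW ka0_lt_mu0).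
have [T omh_gt0] := assoc_fun_eventually_gt0 fact_weight_gt0 Mh_root.
exists (Num.max t0 T); split; first by rewrite lt_max t00.
move=> t; rewrite ge_max => /andP[t0t Tt]; have g0 := omh_gt0 t Tt; split => //.
exact: (assoc_fun_rescaled_le_fact mu0_gt0 t00 growth t0t g0).
Qed.

Lemma dilation_bounded_fact mu ka : dilation_bounded om mu ka -> 1 <= mu -> 1 <= ka ->
  dilation_bounded omh (ka * mu) ((1 + expR 1 * mu0) * ka).
Proof.
move=> [r0 [r00 om_dil]] mu1 ka1.
have ka_gt0 := lt_le_trans ltr01 ka1; have mu_gt0 := lt_le_trans ltr01 mu1.
have [t1 [t10 rescaled]] := assoc_fun_rescaled_le_fact_eventually.
have A0 : 0 < expR 1 * mu0 by rewrite mulr_gt0 ?expR_gt0 // (lt_trans ltr01).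
have [T [T0 ratio]] := assoc_fun_fact_ratio_unbounded (ltW (mulr_gt0 A0 r00)).
exists (Num.max t1 T); split; first by rewrite lt_max t10.
move=> t; rewrite ge_max => /andP[t1t Tt]; have t0 := lt_le_trans T0 Tt.
have [g0 om_le] := rescaled t t1t; have ratio_t := ratio t Tt.
set A := expR 1 * mu0 in A0 om_le ratio_t *; set g := omh t in g0 om_le ratio_t *.
set r := t / (A * g) in om_le *.
have r0r : r0 <= r by rewrite /r ler_pdivlMr ?(mulr_gt0 A0) // mulrA [r0 * A]mulrC.
have := assoc_fun_fact_le (mulr_gt0 (mulr_gt0 ka_gt0 mu_gt0) t0) (mulr_gt0 ka_gt0 (mulr_gt0 A0 g0)).
have -> : ka * mu * t / (ka * (A * g)) = mu * r.
  by rewrite /r; field; rewrite ?lt0r_neq0.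
move=> /le_trans; apply.
have -> : (1 + A) * ka * g = ka * g + ka * (A * g) by ring.
rewrite lerD2r; apply: le_trans (om_dil r r0r) _; exact: (ler_wpM2l (ltW ka_gt0) om_le).
Qed.

(* Choosing t with t / omh t close to r / 2 makes the error term t / r in
   omh t <= om r + t / r at most omh t / 2. *)
Lemma assoc_fun_fact_bracket T0 r : 0 < T0 -> (forall t, T0 <= t -> 0 < omh t) ->
  2 * (T0 / omh T0) <= r -> exists t, [/\ T0 <= t, omh t <= 2 * om r & r < 2 * mu0 * (t / omh t)].
Proof.
move=> T0_gt0 omh_gt0 r_ge.
have [|t [T0t t_le t_gt]] := exists_ratio_bracket omh_nondecreasing T0_gt0 omh_gt0
  assoc_fun_fact_ratio_unbounded mu0_gt1 (r := r / 2); first lra.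
have t_gt0 := lt_le_trans T0_gt0 T0t; have g_gt0 := omh_gt0 t T0t.
have r_gt0 : 0 < r by apply: lt_le_trans r_ge; rewrite !mulr_gt0 ?invr_gt0 ?omh_gt0.
exists t; split => //; last by lra.
have := assoc_fun_fact_le t_gt0 (divr_gt0 t_gt0 r_gt0).
rewrite (_ : t / (t / r) = r); last by field; rewrite ?lt0r_neq0.
have : t / r <= omh t / 2.
  by move: t_le; rewrite !ler_pdivrMr //; lra.
lra.
Qed.

Lemma dilation_bounded_unfact :
  exists c, 0 < c /\ forall m, dilation_bounded om (c * (mu0 / ka0) ^+ m) (2 * ka0 ^+ m).
Proof.
have mu0_gt0 := lt_trans ltr01 mu0_gt1.
have A0 : 0 < expR 1 * mu0 by rewrite mulr_gt0 ?expR_gt0.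
have [t0 [t00 omh_iter]] := dilation_bounded_iter omh_dil (ltW mu0_gt1) (ltW ka0_gt0).
have [t1 [t10 rescaled]] := assoc_fun_rescaled_le_fact_eventually.
set T0 := Num.max t0 t1; have T0_gt0 : 0 < T0 by rewrite lt_max t00.
have omh_gt0 t : T0 <= t -> 0 < omh t by rewrite ge_max => /andP[_ /rescaled[]].
exists (2 * mu0 * (expR 1 * mu0))^-1; split; first by rewrite invr_gt0 !mulr_gt0.
move=> m; exists (2 * (T0 / omh T0)); split; first by rewrite !mulr_gt0 ?invr_gt0 ?omh_gt0.
move=> r r_ge; have [t [T0t om_r t_gt]] := assoc_fun_fact_bracket T0_gt0 omh_gt0 r_ge.
have t_gt0 := lt_le_trans T0_gt0 T0t; have g_gt0 := omh_gt0 t T0t.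
have r_gt0 : 0 < r by apply: lt_le_trans r_ge; rewrite !mulr_gt0 ?invr_gt0 ?omh_gt0.
set t2 := mu0 ^+ m * t.
have T0t2 : T0 <= t2 by rewrite (le_trans T0t) // ler_pMl // exprn_ege1 // ltW.
have g2_gt0 := omh_gt0 t2 T0t2.
have omh_t2 : omh t2 <= ka0 ^+ m * omh t by apply: omh_iter; rewrite (le_trans _ T0t) ?le_max ?lexx.
have ratio_t2 : (mu0 / ka0) ^+ m * (t / omh t) <= t2 / omh t2.
  rewrite ler_pdivlMr //; apply: le_trans (_ : _ * (ka0 ^+ m * omh t) <= _).
    by apply: ler_wpM2l omh_t2; rewrite mulr_ge0 ?exprn_ge0 ?divr_ge0 ?ltW.
  have -> : (mu0 / ka0) ^+ m * (t / omh t) * (ka0 ^+ m * omh t) = t2.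
    by rewrite /t2 exprMn exprVn; field; rewrite ?expf_neq0 ?lt0r_neq0.
  exact: lexx.
apply: le_trans (_ : om (t2 / (expR 1 * mu0 * omh t2)) <= _).
  apply: om_nondecreasing; first by rewrite !mulr_gt0 ?invr_gt0 ?exprn_gt0 ?divr_gt0 ?mulr_gt0.
  have -> : (2 * mu0 * (expR 1 * mu0))^-1 * (mu0 / ka0) ^+ m * r =
      (mu0 / ka0) ^+ m * (r / (2 * mu0)) / (expR 1 * mu0).
    by field; rewrite ?lt0r_neq0 ?expR_gt0.
  have -> : t2 / (expR 1 * mu0 * omh t2) = t2 / omh t2 / (expR 1 * mu0).
    by field; rewrite ?lt0r_neq0 ?expR_gt0.
  rewrite ler_pM2r ?invr_gt0 //; apply: le_trans ratio_t2.
  by rewrite ler_pM2l ?exprn_gt0 ?divr_gt0 // ler_pdivrMr ?mulr_gt0 //; lra.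
apply: le_trans (proj2 (rescaled t2 _)) _; first by rewrite (le_trans _ T0t2) ?le_max ?lexx ?orbT.
apply: le_trans omh_t2 _; rewrite [2 * _]mulrC -mulrA.
by apply: ler_wpM2l om_r; rewrite exprn_ge0 ?ltW.
Qed.

End FactorialDilation.

Lemma P_prop_fact_succ mu0 ka0 : dilation_bounded omh mu0 ka0 -> 1 < mu0 -> 0 < ka0 -> ka0 < mu0 ->
  forall g, 0 < g -> P_prop om g -> P_prop omh (g + 1).
Proof.
move=> omh_dil mu0_gt1 ka0_gt0 ka0_lt_mu0 g g0 Pg.
have [mu [ka [mu1 ka1 kamu om_dil]]] :=
  dilation_of_P_prop g0 Pg (assoc_fun_eventually_gt0 M_gt0 M_root).
have [mu_gt0 ka_gt0] := (lt_trans ltr01 mu1, lt_trans ltr01 ka1).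
have C0 : 0 < 1 + expR 1 * mu0 by rewrite addr_gt0 ?mulr_gt0 ?expR_gt0 // (lt_trans ltr01).
have slope : (g + 1) * ln ka < ln ka + ln mu by lra.
have [n [ln_mu_gt0 ln_lt]] :=
  exists_nat_affine_lt 0 (ln (1 + expR 1 * mu0)) (addr_gt0 (ln_gt0 ka1) (ln_gt0 mu1)) slope.
have ln_mu : ln ((ka * mu) ^+ n) = 0 + n%:R * (ln ka + ln mu).
  by rewrite lnXn ?mulr_gt0 // lnM ?posrE // add0r mulr_natl.
have ln_ka : ln ((1 + expR 1 * mu0) * ka ^+ n) = ln (1 + expR 1 * mu0) + n%:R * ln ka.
  by rewrite lnM ?posrE ?exprn_gt0 // lnXn // mulr_natl.
apply: (P_prop_of_dilation (mu := (ka * mu) ^+ n) (ka := (1 + expR 1 * mu0) * ka ^+ n)).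
- by rewrite addr_gt0.
- by rewrite -ltr_ln ?posrE ?exprn_gt0 ?mulr_gt0 // ln1 ln_mu.
- by rewrite mulr_gt0 ?exprn_gt0.
- by rewrite ln_ka ln_mu.
- exact: (assoc_fun_eventually_gt0 fact_weight_gt0 Mh_root).
rewrite exprMn; apply: (dilation_bounded_fact omh_dil mu0_gt1 ka0_gt0 ka0_lt_mu0).
- exact: (dilation_boundedX n om_dil (ltW mu1) (ltW ka_gt0)).
- exact/exprn_ege1/ltW.
- exact/exprn_ege1/ltW.
Qed.

Lemma P_prop_fact_pred g : 1 < g -> P_prop omh g -> P_prop om (g - 1).
Proof.
move=> g1 Pg; have g0 := lt_trans ltr01 g1.
have [mu [ka [mu1 ka1 kamu omh_dil]]] :=
  dilation_of_P_prop g0 Pg (assoc_fun_eventually_gt0 fact_weight_gt0 Mh_root).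
have [mu_gt0 ka_gt0] := (lt_trans ltr01 mu1, lt_trans ltr01 ka1).
have ka_lt_mu := ltr_of_scaled_ln_lt (ltW g1) ka1 mu_gt0 kamu.
have [c [c0 om_dil]] := dilation_bounded_unfact omh_dil mu1 ka_gt0 ka_lt_mu.
have rate_gt0 : 0 < ln mu - ln ka by rewrite subr_gt0 ltr_ln ?posrE.
have slope : (g - 1) * ln ka < ln mu - ln ka by lra.
have [m [ln_mu_gt0 ln_lt]] := exists_nat_affine_lt (ln c) (ln 2) rate_gt0 slope.
have ln_mu : ln (c * (mu / ka) ^+ m) = ln c + m%:R * (ln mu - ln ka).
  by rewrite lnM ?posrE ?exprn_gt0 ?divr_gt0 // lnXn ?divr_gt0 // ln_div ?posrE // mulr_natl.
have ln_ka : ln (2 * ka ^+ m) = ln 2 + m%:R * ln ka.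
  by rewrite lnM ?posrE ?exprn_gt0 // lnXn // mulr_natl.
apply: (P_prop_of_dilation (mu := c * (mu / ka) ^+ m) (ka := 2 * ka ^+ m)).
- by rewrite subr_gt0.
- by rewrite -ltr_ln ?posrE ?mulr_gt0 ?exprn_gt0 ?divr_gt0 // ln1 ln_mu.
- by rewrite mulr_gt0 ?exprn_gt0.
- by rewrite ln_ka ln_mu.
- exact: (assoc_fun_eventually_gt0 M_gt0 M_root).
- exact: om_dil.
Qed.

Lemma gamma_index_fact_le : (gamma_index omh <= gamma_index om + 1%:E)%E.
Proof.
apply: gamma_index_le => [|g g0 Pg]; first by rewrite adde_ge0 ?gamma_index_ge0.
have [g_le1|g_gt1] := lerP g 1.
  by apply: (@le_trans _ _ 1%:E); [rewrite lee_fin | exact: leeDr (gamma_index_ge0 _)].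
rewrite -[g](subrK 1) EFinD; apply: leeD2r; apply: le_gamma_index; first by rewrite subr_gt0.
exact: P_prop_fact_pred g_gt1 Pg.
Qed.

Lemma gamma_index_fact_ge : (1%:E < gamma_index omh)%E ->
  (gamma_index om + 1%:E <= gamma_index omh)%E.
Proof.
move=> gamma_gt1; have [g1 [g1_gt1 Pg1]] := lt_gamma_index ler01 gamma_gt1.
have [mu0 [ka0 [mu0_gt1 ka0_gt1 ka0_mu0 omh_dil]]] := dilation_of_P_prop (lt_trans ltr01 g1_gt1)
  Pg1 (assoc_fun_eventually_gt0 fact_weight_gt0 Mh_root).
have ka0_lt_mu0 := ltr_of_scaled_ln_lt (ltW g1_gt1) ka0_gt1 (lt_trans ltr01 mu0_gt1) ka0_mu0.
rewrite -leeBrDr //; apply: gamma_index_le => [|g g0 Pg]; first by rewrite leeBrDr // add0e ltW.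
rewrite leeBrDr // -EFinD; apply: le_gamma_index; first by rewrite addr_gt0.
exact: (P_prop_fact_succ omh_dil mu0_gt1 (lt_trans ltr01 ka0_gt1) ka0_lt_mu0 g0 Pg).
Qed.

End FactorialWeight.

Unset Implicit Arguments.

Theorem corollary4p11 (R : realType) (M : nat -> R) :
  (forall p, 0 < M p) -> M 0%N = 1 ->
  weight_seq (fun p : nat => (p`!%:R * M p)%R) ->
  root_unbounded M ->
  (1%:E < gamma_index (assoc_fun (fun p : nat => (p`!%:R * M p)%R)))%E ->
  gamma_index (assoc_fun (fun p : nat => (p`!%:R * M p)%R))
    = (gamma_index (assoc_fun M) + 1%:E)%E.
Proof.
move=> M_gt0 M0 [_ _ _ Mh_root] M_root gamma_gt1.
apply: le_anti; rewrite (gamma_index_fact_le M_gt0 M0 M_root Mh_root).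
exact: gamma_index_fact_ge M_gt0 M0 M_root Mh_root gamma_gt1.
Qed.
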